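(* Let $\mathcal C$ be a graph class of effectively bounded expansion. Then there exist a computable function $f$ and a CONGESTED-CLIQUE algorithm that, given a vertex- and edge-coloured graph $G$ whose underlying graph belongs to $\mathcal C$ (as the network) and a first-order sentence $\varphi$ (known to all nodes), decides in $f(|\varphi|)\cdot\log n$ rounds whether $G\models\varphi$, where $n=|V(G)|$. In particular, first-order model checking parameterized by the length of the formula is in CONGESTED-CLIQUE-XPL on $\mathcal C$.
   Context: CONGESTED-CLIQUE model: the network is a finite connected undirected graph $G$, $n=|V(G)|$, nodes have unique $O(\log n)$-bit identifiers and initially know their identifier, neighbours' identifiers, input labels and the parameter; in each synchronous round each node may send an $O(\log n)$-bit message to every other node; arbitrary local computation. Decisions are disjunctive: the answer is yes iff some node accepts. CONGESTED-CLIQUE-XPL is the class of parameterized problems decidable in $f(k)\cdot(\log n)^{g(k)}$ rounds for computable $f,g$. $|\varphi|$ is the length of a fixed computable encoding of $\varphi$. A graph $H$ is a depth-$r$ minor of $G$ if $H$ can be obtained from a subgraph of $G$ by contracting mutually disjoint connected subgraphs of radius at most $r$. A class $\mathcal C$ has bounded expansion if there is $f:\mathbb N\to\mathbb N$ such that for every $r$, every depth-$r$ minor $H$ of a graph in $\mathcal C$ satisfies $|E(H)|/|V(H)|\le f(r)$; it has effectively bounded expansion if such an $f$ can be chosen computable. *)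

From mathcomp Require Import all_boot.
Set Implicit Arguments.
Unset Strict Implicit.
Unset Printing Implicit Defensive.

(* Computability: mu-recursive functions (equivalent to Turing         *)
(* computability).  Arities are handled leniently (missing arguments   *)
(* read as 0), which does not change the class of computable functions.*)
Inductive recf : Type :=
| RZero
| RSucc
| RProj (i : nat)
| RComp (g : recf) (hs : list recf)
| RPrim (g h : recf)
| RMu (g : recf).

Inductive reval : recf -> seq nat -> nat -> Prop :=
| ev_zero xs : reval RZero xs 0
| ev_succ xs : reval RSucc xs (head 0 xs).+1
| ev_proj i xs : reval (RProj i) xs (nth 0 xs i)
| ev_comp g hs xs ys y :
    revals hs xs ys -> reval g ys y -> reval (RComp g hs) xs y
| ev_prim0 g h xs y : reval g xs y -> reval (RPrim g h) (0 :: xs) y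
| ev_primS g h k xs z y :
    reval (RPrim g h) (k :: xs) z -> reval h (k :: z :: xs) y ->
    reval (RPrim g h) (k.+1 :: xs) y
| ev_mu g xs y :
    reval g (y :: xs) 0 ->
    (forall z, z < y -> exists2 w, reval g (z :: xs) w & w <> 0) ->
    reval (RMu g) xs y
with revals : list recf -> seq nat -> seq nat -> Prop :=
| evs_nil xs : revals nil xs [::]
| evs_cons h hs xs y ys :
    reval h xs y -> revals hs xs ys -> revals (h :: hs) xs (y :: ys).

Definition computable (f : nat -> nat) : Prop :=
  exists p : recf, forall x, reval p [:: x] (f x).

Definition simple_graph (n : nat) (adj : rel 'I_n) : Prop :=
  (forall x y, adj x y = adj y x) /\ (forall x, adj x x = false).

Definition connected_graph (n : nat) (adj : rel 'I_n) : Prop :=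
  forall x y, connect adj x y.

Definition nedges (n : nat) (adj : rel 'I_n) : nat :=
  #|[set p : 'I_n * 'I_n | adj p.1 p.2 && (p.1 < p.2)]|.

Definition graph_class := forall n : nat, rel 'I_n -> Prop.

Fixpoint ball (T : finType) (adj : rel T) (X : {set T}) (c : T) (k : nat)
  : {set T} :=
  match k with
  | 0 => [set c]
  | k'.+1 => let b := ball adj X c k' in
             b :|: [set y in X | [exists x in b, adj x y]]
  end.

Definition depth_minor (r n : nat) (adj : rel 'I_n) (m : nat) (adjH : rel 'I_m)
  : Prop :=
  exists B : 'I_m -> {set 'I_n},
    (forall i j, i != j -> [disjoint B i & B j]) /\
    (forall i, exists2 c, c \in B i & B i \subset ball adj (B i) c r) /\
    (forall i j, adjH i j -> exists x y, [/\ x \in B i, y \in B j & adj x y]).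

Definition bounded_expansion_with (C : graph_class) (f : nat -> nat) : Prop :=
  forall r n (adj : rel 'I_n), C n adj -> simple_graph adj ->
  forall m (adjH : rel 'I_m), simple_graph adjH -> depth_minor r adj adjH ->
  nedges adjH <= f r * m.

Definition effectively_bounded_expansion (C : graph_class) : Prop :=
  exists f, computable f /\ bounded_expansion_with C f.

Inductive formula : Type :=
| FEq (x y : nat)
| FAdj (x y : nat)
| FVcol (i x : nat)
| FEcol (j x y : nat)
| FNot (p : formula)
| FAnd (p q : formula)
| FOr (p q : formula)
| FEx (x : nat) (p : formula)
| FAll (x : nat) (p : formula).

Fixpoint fv (p : formula) : seq nat :=
  match p with
  | FEq x y | FAdj x y | FEcol _ x y => [:: x; y]
  | FVcol _ x => [:: x]
  | FNot q => fv q
  | FAnd q r | FOr q r => fv q ++ fv r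
  | FEx x q | FAll x q => filter (fun z => z != x) (fv q)
  end.

Definition sentence (p : formula) : bool := nilp (fv p).

(* length of the encoding: one symbol per connective, indices in unary *)
Fixpoint flen (p : formula) : nat :=
  match p with
  | FEq x y | FAdj x y => 1 + x.+1 + y.+1
  | FVcol i x => 1 + i.+1 + x.+1
  | FEcol j x y => 1 + j.+1 + x.+1 + y.+1
  | FNot q => (flen q).+1
  | FAnd q r | FOr q r => (flen q + flen r).+1
  | FEx x q | FAll x q => (x.+1 + flen q).+1
  end.

Fixpoint sat (n : nat) (adj : rel 'I_n) (vcol : 'I_n -> nat -> bool)
  (ecol : 'I_n -> 'I_n -> nat -> bool) (e : nat -> 'I_n) (p : formula) : Prop :=
  match p with
  | FEq x y => e x = e y
  | FAdj x y => adj (e x) (e y)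
  | FVcol i x => vcol (e x) i
  | FEcol j x y => adj (e x) (e y) && ecol (e x) (e y) j
  | FNot q => ~ sat adj vcol ecol e q
  | FAnd q r => sat adj vcol ecol e q /\ sat adj vcol ecol e r
  | FOr q r => sat adj vcol ecol e q \/ sat adj vcol ecol e r
  | FEx x q => exists v, sat adj vcol ecol (fun z => if z == x then v else e z) q
  | FAll x q => forall v, sat adj vcol ecol (fun z => if z == x then v else e z) q
  end.

(* G |= phi for a sentence phi (the environment is irrelevant; any     *)
(* vertex may be used since n > 0)                                     *)
Definition models (n : nat) (adj : rel 'I_n) vcol ecol (v0 : 'I_n)
  (p : formula) : Prop := sat adj vcol ecol (fun _ => v0) p.

(* CONGESTED-CLIQUE algorithms (synchronous rounds, every node can     *)
(* send one message, a bit string, to every other node addressed by    *)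
(* its identifier; arbitrary local computation).                        *)
(* Initial knowledge of a node: its identifier, its own colours, the   *)
(* identifiers of its neighbours together with the colours of the      *)
(* connecting edges, and the parameter (the formula).                  *)
Record cc_algorithm := CCAlg {
  cc_state : Type;
  cc_init : nat -> (nat -> bool) -> (nat -> option (nat -> bool)) ->
            formula -> cc_state;
  (* message sent to the node with the given identifier *)
  cc_send : cc_state -> nat -> seq bool;
  (* received messages, indexed by sender identifier *)
  cc_recv : cc_state -> (nat -> option (seq bool)) -> cc_state;
  (* output: None = still running, Some b = halted with decision b *)
  cc_out : cc_state -> option bool
}.

Section Run.
Variables (A : cc_algorithm) (n : nat) (adj : rel 'I_n)
  (vcol : 'I_n -> nat -> bool) (ecol : 'I_n -> 'I_n -> nat -> bool)
  (id : 'I_n -> nat) (p : formula).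

Definition init_state (v : 'I_n) : cc_state A :=
  @cc_init A (id v) (vcol v)
    (fun k => match [pick u | adj v u && (id u == k)] with
              | Some u => Some (ecol v u)
              | None => None end) p.

Fixpoint run (t : nat) : 'I_n -> cc_state A :=
  match t with
  | 0 => init_state
  | t'.+1 => let st := run t' in
      fun v => @cc_recv A (st v)
        (fun k => match [pick u | (u != v) && (id u == k)] with
                  | Some u => Some (@cc_send A (st u) (id v))
                  | None => None end)
  end.
End Run.

Definition cc_decides (A : cc_algorithm) (B T : nat) (n : nat) (adj : rel 'I_n)
  vcol ecol (id : 'I_n -> nat) (p : formula) (answer : Prop) : Prop :=
  (forall t u v, t < T -> u != v ->
     size (@cc_send A (run A adj vcol ecol id p t u) (id v)) <= B * up_log 2 n) /\
  (forall t v b, t < T -> @cc_out A (run A adj vcol ecol id p t v) = Some b ->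
     @cc_out A (run A adj vcol ecol id p t.+1 v) = Some b) /\
  (forall v, @cc_out A (run A adj vcol ecol id p T v) != None) /\
  ((exists v, @cc_out A (run A adj vcol ecol id p T v) = Some true) <-> answer).

From mathcomp Require Import all_boot.
From Stdlib Require Import ClassicalEpsilon Lia.
From mathcomp Require Import zify.
Set Implicit Arguments.
Unset Strict Implicit.
Unset Printing Implicit Defensive.

(* Bounded expansion gives at most f(0) * n edges, since G is a depth-0 minor of
   itself, and then every node can learn the whole coloured graph in
   O(f(0) * |phi|) rounds and evaluate phi locally.  After announcing their
   identifiers (round 0) and degrees (round 1), all nodes know the prefix sums
   of the degrees, which number the 2|E| <= 2 f(0) n oriented edges
   consecutively.  Edge number i is sent to the node of rank i mod n, which
   therefore holds at most 2 f(0) edges and broadcasts them.  Colours are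
   transmitted one index per round, and only the indices below |phi| matter. *)

Fixpoint bits (w x : nat) : seq bool :=
  if w is w'.+1 then odd x :: bits w' x./2 else [::].

Fixpoint frombits (s : seq bool) : nat :=
  if s is b :: s' then b + (frombits s').*2 else 0.

Lemma size_bits w x : size (bits w x) = w.
Proof. by elim: w x => //= w IH x; rewrite IH. Qed.

Lemma bitsK w x : x < 2 ^ w -> frombits (bits w x) = x.
Proof.
elim: w x => [|w IH] x /=; first by rewrite expn0 ltnS leqn0 => /eqP.
move=> hx; rewrite IH ?odd_double_half //.
rewrite -(ltn_pmul2l (isT : 0 < 2)) -expnS (leq_ltn_trans _ hx) //.
by rewrite mul2n -[X in _ <= X]odd_double_half leq_addl.
Qed.

Lemma eq_filter_iota (p : pred nat) N N' :
  (forall k, p k -> k < N) -> (forall k, p k -> k < N') ->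
  filter p (iota 0 N) = filter p (iota 0 N').
Proof.
wlog hNN : N N' / N <= N'.
  by move=> W h1 h2; case: (leqP N N') => h; [|symmetry]; apply: W => //; lia.
move=> h1 _; rewrite -(subnKC hNN) iotaD filter_cat.
have -> : filter p (iota (0 + N) (N' - N)) = [::].
  apply/eqP; rewrite -[_ == _]negbK -has_filter; apply/hasPn => k.
  by rewrite mem_iota => /andP [hk _]; apply/negP => /h1; lia.
by rewrite cats0.
Qed.

Lemma nth_bits_cat w x s i : nth false (bits w x ++ s) (w + i) = nth false s i.
Proof. by rewrite nth_cat size_bits ltnNge leq_addr addKn. Qed.

Lemma nth_bits_size w x s : nth false (bits w x ++ s) w = head false s.
Proof. by rewrite nth_cat size_bits ltnn subnn; case: s. Qed.

Lemma ltn_mul_add q c D K : q < D -> c < K -> q * K + c < D * K.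
Proof.
move=> hq hc; apply: leq_trans (_ : q.+1 * K <= _); first by rewrite mulSn; lia.
by rewrite leq_mul2r hq orbT.
Qed.

Definition recf_const (b : nat) : recf :=
  iter b (fun p => RComp RSucc [:: p]) RZero.

Definition recf_addn (a : nat) (p : recf) : recf :=
  iter a (fun q => RComp RSucc [:: q]) p.

Lemma reval_succ p xs y : reval p xs y -> reval (RComp RSucc [:: p]) xs y.+1.
Proof.
move=> hp; apply: (ev_comp (ys := [:: y])); first exact: evs_cons (evs_nil _).
exact: (ev_succ [:: y]).
Qed.

Lemma reval_const b xs : reval (recf_const b) xs b.
Proof. by elim: b => [|b IH] /=; [exact: ev_zero | exact: reval_succ]. Qed.

Lemma reval_addn a p xs y : reval p xs y -> reval (recf_addn a p) xs (y + a).
Proof.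
by move=> hp; elim: a => [|a IH] /=; [rewrite addn0 | rewrite addnS; exact: reval_succ].
Qed.

Lemma computable_affine a b : computable (fun x => a * x + b).
Proof.
exists (RPrim (recf_const b) (recf_addn a (RProj 1))); elim=> [|x IH].
  by rewrite muln0; apply: ev_prim0; exact: reval_const.
apply: (ev_primS IH); rewrite (_ : a * x.+1 + b = a * x + b + a); last by lia.
exact: reval_addn (ev_proj 1 [:: x; a * x + b]).
Qed.

(** * Graphs and first-order logic *)

Definition deg n (adj : rel 'I_n) x := #|[pred w | adj x w]|.

Lemma deg_lt n (adj : rel 'I_n) x : simple_graph adj -> deg adj x < n.
Proof.
move=> [_ irr]; rewrite /deg -[n in _ < n]card_ord; apply: proper_card.
by apply/properP; split; [apply/subsetP | exists x; rewrite ?inE ?irr].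
Qed.

Lemma sum_deg n (adj : rel 'I_n) : simple_graph adj ->
  \sum_x deg adj x = 2 * nedges adj.
Proof.
move=> [sym irr].
have -> : \sum_x deg adj x = \sum_(p : 'I_n * 'I_n | adj p.1 p.2) 1.
  rewrite -(pair_big_dep predT (fun x y => adj x y) (fun _ _ => 1)) /=.
  by apply: eq_bigr => x _; rewrite /deg -sum1_card.
rewrite (bigID (fun p : 'I_n * 'I_n => p.1 < p.2)) /=.
have -> : \sum_(p : 'I_n * 'I_n | adj p.1 p.2 && ~~ (p.1 < p.2)) 1 =
          \sum_(p : 'I_n * 'I_n | adj p.1 p.2 && (p.1 < p.2)) 1.
  rewrite (reindex_inj (h := fun p : 'I_n * 'I_n => (p.2, p.1))) /=;
    last by move=> [a b] [c d] [-> ->].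
  apply: eq_bigl => -[a b] /=; rewrite sym.
  case hab: (adj a b) => //=; rewrite -leqNgt leq_eqVlt.
  by case: eqP => [/val_inj ab|] //=; rewrite ab irr in hab.
rewrite /nedges -sum1_card mul2n addnn; congr (_.*2).
by apply: eq_bigl => p; rewrite !inE.
Qed.


Lemma connected_has_nbr n (adj : rel 'I_n) v : 1 < n -> connected_graph adj ->
  exists u, adj v u.
Proof.
move=> n_gt1 conn; have /card_gt0P [w] : 0 < #|predC1 v| by rewrite cardC1 card_ord; lia.
rewrite !inE => wv; case/connectP: (conn v w) => [[|u p] /= hp hw].
  by rewrite hw eqxx in wv.
by exists u; case/andP: hp.
Qed.

Definition holds (P : Prop) : bool :=
  if excluded_middle_informative P then true else false.

Lemma holdsP P : reflect P (holds P).
Proof. by rewrite /holds; case: excluded_middle_informative => h; constructor. Qed.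

Section Semantics.
Variables (n : nat) (adj : rel 'I_n) (vcol : 'I_n -> nat -> bool)
  (ecol : 'I_n -> 'I_n -> nat -> bool).

Lemma eq_sat (p : formula) (e1 e2 : nat -> 'I_n) :
  {in fv p, e1 =1 e2} -> sat adj vcol ecol e1 p <-> sat adj vcol ecol e2 p.
Proof.
elim: p e1 e2 => /= [x y|x y|i x|j x y|p IH|p IHp q IHq|p IHp q IHq|x p IH|x p IH]
  e1 e2 E; try by rewrite !E ?inE ?eqxx ?orbT.
- by rewrite (IH e1 e2 E).
- by rewrite (IHp e1 e2) ?(IHq e1 e2) // => z hz; apply: E; rewrite mem_cat hz ?orbT.
- by rewrite (IHp e1 e2) ?(IHq e1 e2) // => z hz; apply: E; rewrite mem_cat hz ?orbT.
- have E' v : {in fv p, (fun z => if z == x then v else e1 z) =1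
                        (fun z => if z == x then v else e2 z)}.
    by move=> z hz /=; case: eqP => // /eqP zx; apply: E; rewrite mem_filter zx.
  by split=> -[v hv]; exists v; apply/(IH _ _ (E' v)).
- have E' v : {in fv p, (fun z => if z == x then v else e1 z) =1
                        (fun z => if z == x then v else e2 z)}.
    by move=> z hz /=; case: eqP => // /eqP zx; apply: E; rewrite mem_filter zx.
  by split=> hv v; apply/(IH _ _ (E' v)).
Qed.

Lemma sentence_sat (p : formula) (e1 e2 : nat -> 'I_n) :
  sentence p -> sat adj vcol ecol e1 p <-> sat adj vcol ecol e2 p.
Proof. by rewrite /sentence => /nilP hp; apply: eq_sat; rewrite hp. Qed.

End Semantics.

Lemma sat_iso n1 n2 (adj1 : rel 'I_n1) vc1 ec1 (adj2 : rel 'I_n2) vc2 ec2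
    (h : 'I_n1 -> 'I_n2) (hinv : 'I_n2 -> 'I_n1) (K : nat) :
  injective h -> cancel hinv h ->
  (forall x y, adj2 (h x) (h y) = adj1 x y) ->
  (forall x i, i < K -> vc2 (h x) i = vc1 x i) ->
  (forall x y j, j < K -> adj1 x y -> ec2 (h x) (h y) j = ec1 x y j) ->
  forall p, flen p <= K -> forall e1 e2, (forall z, e2 z = h (e1 z)) ->
  sat adj1 vc1 ec1 e1 p <-> sat adj2 vc2 ec2 e2 p.
Proof.
move=> hi hK hadj hvc hec; elim=> /=
  [x y|x y|i x|j x y|p IH|p IHp q IHq|p IHp q IHq|x p IH|x p IH] hp e1 e2 E.
- by rewrite !E; split=> [->|/hi].
- by rewrite !E hadj.
- by rewrite !E hvc //; lia.
- by rewrite !E hadj; case hA: (adj1 _ _) => //=; rewrite hec //; lia.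
- by rewrite (IH _ e1 e2 E) //; lia.
- by rewrite (IHp _ e1 e2 E) ?(IHq _ e1 e2 E) //; lia.
- by rewrite (IHp _ e1 e2 E) ?(IHq _ e1 e2 E) //; lia.
- have {}IH := IH ltac:(lia).
  have E' v z : (if z == x then h v else e2 z) = h (if z == x then v else e1 z).
    by case: eqP.
  split=> [[v hv]|[w hw]]; first by exists (h v); apply/(IH _ _ (E' v)).
  by exists (hinv w); apply/(IH _ _ (E' (hinv w))); rewrite hK.
- have {}IH := IH ltac:(lia).
  have E' v z : (if z == x then h v else e2 z) = h (if z == x then v else e1 z).
    by case: eqP.
  split=> hv w; last by apply/(IH _ _ (E' w)).
  by rewrite -(hK w); apply/(IH _ _ (E' (hinv w))).
Qed.

(** * The algorithm *)

Definition inbox := seq (nat -> option (seq bool)).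

Record node := Node {
  node_id : nat;
  node_vcol : nat -> bool;
  node_nbr : nat -> option (nat -> bool);
  node_phi : formula;
  node_inbox : inbox }.

Definition received (h : inbox) s k := nth (fun _ => None) h s k.
Definition msg (h : inbox) s k := odflt [::] (received h s k).

(* Every node sends in round 0, so the round-0 senders are exactly the identifiers. *)
Definition is_id (h : inbox) k : bool := received h 0 k != None.
Definition id_bound (h : inbox) :=
  epsilon (inhabits 0) (fun N => forall k, is_id h k -> k < N).
Definition nnodes (h : inbox) := count (is_id h) (iota 0 (id_bound h)).
Definition width (h : inbox) := up_log 2 (nnodes h).
Definition rank (h : inbox) k := count (is_id h) (iota 0 k).
Definition id_of_rank (h : inbox) r :=
  epsilon (inhabits 0) (fun k => is_id h k /\ rank h k = r).
Definition deg_of_rank (h : inbox) r := frombits (msg h 1 (id_of_rank h r)).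
Definition edge_offset (h : inbox) r := \sum_(0 <= r' < r) deg_of_rank h r'.
Definition owner (h : inbox) i := epsilon (inhabits 0)
  (fun o => o < nnodes h /\ edge_offset h o <= i < edge_offset h o.+1).

Definition nbr_ids st :=
  filter (fun k => isSome (node_nbr st k)) (iota 0 (id_bound (node_inbox st))).
Definition own_deg st := size (nbr_ids st).

(* The j-th edge of the node of rank r gets the global number
   [edge_offset r + j] and is sent, in round [2 + a], to the node of rank
   [edge_offset r + j] modulo n, together with the colour bits of index a. *)
Definition scatter_msg (st : node) (a k : nat) : seq bool :=
  let h := node_inbox st in let n := nnodes h in
  let j := (rank h k + (n - edge_offset h (rank h (node_id st)) %% n)) %% n in
  let y := nth 0 (nbr_ids st) j in
  bits (width h) (rank h y) ++
    [:: if node_nbr st y is Some c then c a else false; node_vcol st a].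

(* The node of rank r holds the edges numbered [r + q * n]; in round
   [2 + K + q * K + c] it broadcasts the q-th of them with its colour bit c. *)
Definition relay_msg (st : node) (q c : nat) : seq bool :=
  let h := node_inbox st in let W := width h in
  let i := rank h (node_id st) + q * nnodes h in
  let m := msg h (2 + c) (id_of_rank h (owner h i)) in
  bits W (owner h i) ++ bits W (frombits (take W m)) ++
    [:: i < edge_offset h (nnodes h); nth false m W].

Definition send (D : nat) (st : node) (k : nat) : seq bool :=
  let t := size (node_inbox st) in let K := flen (node_phi st) in
  if t == 0 then [::]
  else if t == 1 then bits (width (node_inbox st)) (own_deg st)
  else if t < 2 + K then scatter_msg st (t - 2) k
  else if t < 2 + K + D * K then relay_msg st ((t - (2 + K)) %/ K) ((t - (2 + K)) %% K)
  else [::].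

Definition recv D st (msgs : nat -> option (seq bool)) :=
  Node (node_id st) (node_vcol st) (node_nbr st) (node_phi st)
    (rcons (node_inbox st)
       (fun k => if k == node_id st then Some (send D st k) else msgs k)).

Definition rounds (D : nat) (phi : formula) := 2 + flen phi + D * flen phi.

Definition relay_round phi q c := 2 + flen phi + q * flen phi + c.

Definition slot phi h r q c := msg h (relay_round phi q c) (id_of_rank h r).
Definition slot_valid phi h r q := nth false (slot phi h r q 0) (width h).*2.
Definition slot_src phi h r q := frombits (take (width h) (slot phi h r q 0)).
Definition slot_dst phi h r q :=
  frombits (take (width h) (drop (width h) (slot phi h r q 0))).
Definition slot_ecol phi h r q c := nth false (slot phi h r q c) (width h).*2.+1.

Definition slot_edge D phi h (P : nat -> nat -> bool) :=
  has (fun r => has (fun q => slot_valid phi h r q && P r q) (iota 0 D))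
    (iota 0 (nnodes h)).

Definition gathered_adj D phi h : rel 'I_(nnodes h) := fun a b =>
  slot_edge D phi h (fun r q => (slot_src phi h r q == a) && (slot_dst phi h r q == b)).
Definition gathered_ecol D phi h (a b : 'I_(nnodes h)) c := (c < flen phi) &&
  slot_edge D phi h (fun r q =>
    [&& slot_src phi h r q == a, slot_dst phi h r q == b & slot_ecol phi h r q c]).
Definition gathered_vcol phi h (a : 'I_(nnodes h)) c :=
  (c < flen phi) && nth false (msg h (2 + c) (id_of_rank h a)) (width h).+1.
Arguments gathered_adj : clear implicits.
Arguments gathered_ecol : clear implicits.
Arguments gathered_vcol : clear implicits.

Definition decide_gathered D phi h : bool :=
  holds (exists w, sat (gathered_adj D phi h) (gathered_vcol phi h)
                       (gathered_ecol D phi h) (fun _ => w) phi).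

Definition decide_alone st : bool :=
  holds (sat (fun _ _ : 'I_1 => false) (fun _ c => node_vcol st c)
             (fun _ _ _ => false) (fun _ => ord0) (node_phi st)).

(* A node without neighbours is the whole (connected) graph: it answers at once. *)
Definition out D st : option bool :=
  if holds (forall k, node_nbr st k = None) then Some (decide_alone st)
  else if rounds D (node_phi st) <= size (node_inbox st)
  then Some (decide_gathered D (node_phi st)
               (take (rounds D (node_phi st)) (node_inbox st)))
  else None.

Definition gather_alg D :=
  CCAlg (fun i vc nb phi => Node i vc nb phi [::]) (send D) (recv D) (out D).

(** * Analysis of a run *)

Section Run.
Variables (D n : nat) (adj : rel 'I_n) (vcol : 'I_n -> nat -> bool)
  (ecol : 'I_n -> 'I_n -> nat -> bool) (id : 'I_n -> nat) (phi : formula).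
Hypothesis id_inj : injective id.

Definition state t v := run (gather_alg D) adj vcol ecol id phi t v.

Definition nbr_table v k :=
  if [pick u | adj v u && (id u == k)] is Some u then Some (ecol v u) else None.

Definition delivered s v k :=
  if [pick w | id w == k] is Some w then Some (send D (state s w) (id v)) else None.

Lemma state_fields t v : [/\ node_id (state t v) = id v, node_vcol (state t v) = vcol v,
   node_nbr (state t v) = nbr_table v & node_phi (state t v) = phi].
Proof. by elim: t v => [|t IH] v //=; case: (IH v). Qed.

Lemma size_inbox t v : size (node_inbox (state t v)) = t.
Proof. by elim: t v => [|t IH] v //=; rewrite size_rcons IH. Qed.

Lemma pick_id w : [pick x | id x == id w] = Some w.
Proof. by case: pickP => [x /eqP /id_inj -> //|/(_ w)]; rewrite eqxx. Qed.

Lemma received_state t v s k : s < t ->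
  received (node_inbox (state t v)) s k = delivered s v k.
Proof.
elim: t v => [//|t IH] v hs.
rewrite /received /= nth_rcons -/(state t v) size_inbox.
case: ltnP => [|hge]; first exact: IH.
have -> : s = t by lia.
rewrite eqxx; case: (state_fields t v) => -> _ _ _.
rewrite /delivered; case: eqP => [->|kv]; first by rewrite pick_id.
rewrite (@eq_pick _ _ (fun w => id w == k)) // => w.
by case: eqP => // hw; case: eqP => // wv; case: kv; rewrite -hw wv.
Qed.

Arguments state : simpl never.

Definition consistent (h : inbox) v m :=
  forall s k, s < m -> received h s k = delivered s v k.

Lemma consistent_state t v : consistent (node_inbox (state t v)) v t.
Proof. by move=> s k; apply: received_state. Qed.

Arguments consistent_state : clear implicits.

Lemma consistent_take t v m : consistent (take m (node_inbox (state t v))) v (minn m t).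
Proof.
by move=> s k hs; rewrite /received nth_take; [apply: received_state|]; lia.
Qed.

Arguments consistent_take : clear implicits.

Lemma consistent_le h v m m' : m' <= m -> consistent h v m -> consistent h v m'.
Proof. by move=> hm g s k hs; apply: g; lia. Qed.

Lemma msg_consistent h v m s x : consistent h v m -> s < m ->
  msg h s (id x) = send D (state s x) (id v).
Proof. by move=> g hs; rewrite /msg g // /delivered pick_id. Qed.

Lemma is_id_consistent h v m k : consistent h v m -> 0 < m ->
  is_id h k = [exists w, id w == k].
Proof.
move=> g hm; rewrite /is_id g // /delivered; case: pickP => [w /eqP <-|H].
  by apply/esym/existsP; exists w.
by apply/esym/negbTE/existsP => -[w]; rewrite H.
Qed.

Lemma count_ids (A : pred 'I_n) (p : pred nat) N :
  (forall k, p k = [exists w, A w && (id w == k)]) ->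
  count p (iota 0 N) = #|[pred w | A w && (id w < N)]|.
Proof.
move=> hp; rewrite -size_filter cardE -(size_map id).
apply: perm_size; apply: uniq_perm.
- exact/filter_uniq/iota_uniq.
- by rewrite map_inj_uniq ?enum_uniq.
move=> k; rewrite mem_filter mem_iota add0n /= hp; apply/idP/idP.
  case/andP=> /existsP [w /andP [hA /eqP hk]] hN.
  by apply/mapP; exists w => //; rewrite mem_enum inE hA hk hN.
case/mapP=> w; rewrite mem_enum inE => /andP [hA hN] ->.
by rewrite hN andbT; apply/existsP; exists w; rewrite hA eqxx.
Qed.

Definition rk x := #|[pred w : 'I_n | id w < id x]|.

Lemma rk_lt x : rk x < n.
Proof.
rewrite /rk -[n in _ < n]card_ord; apply: proper_card; apply/properP.
by split; [apply/subsetP | exists x; rewrite ?inE // ltnn].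
Qed.

Lemma rk_mono x y : id x < id y -> rk x < rk y.
Proof.
move=> hxy; apply: proper_card; apply/properP; split.
  by apply/subsetP => w; rewrite !inE => h; lia.
by exists x; rewrite !inE ?hxy ?ltnn.
Qed.

Lemma rk_inj : injective rk.
Proof.
move=> x y hr; apply: id_inj.
by case: (ltngtP (id x) (id y)) => // /rk_mono; rewrite hr ltnn.
Qed.

Lemma rk_onto r : r < n -> exists x, rk x = r.
Proof.
move=> hr; have inj : injective (fun x => Ordinal (rk_lt x)).
  by move=> x y /(congr1 val) /= /rk_inj.
have /codomP [x hx] := injF_onto inj (Ordinal hr).
by exists x; have := congr1 val hx.
Qed.

Definition id_sup := \max_(w : 'I_n) (id w).+1.

Lemma id_lt_sup w : id w < id_sup.
Proof. exact: (leq_bigmax (F := fun w => (id w).+1)). Qed.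

Section Consistent.
Variables (h : inbox) (v : 'I_n) (m : nat).
Hypotheses (g : consistent h v m) (m_gt0 : 0 < m).

Lemma id_boundP w : id w < id_bound h.
Proof.
suff : forall k, is_id h k -> k < id_bound h.
  by apply; rewrite (is_id_consistent _ g m_gt0); apply/existsP; exists w.
apply: (epsilon_spec (inhabits 0) (fun N => forall k, is_id h k -> k < N)).
exists id_sup => k.
by rewrite (is_id_consistent k g m_gt0) => /existsP [x /eqP <-]; exact: id_lt_sup.
Qed.

Lemma nnodes_ok : nnodes h = n.
Proof.
rewrite /nnodes (@count_ids predT) => [|k]; last by rewrite (is_id_consistent k g).
by rewrite -[RHS]card_ord; apply: eq_card => w; rewrite !inE id_boundP.
Qed.

Lemma rank_ok x : rank h (id x) = rk x.
Proof.
rewrite /rank (@count_ids predT) => [|k]; last by rewrite (is_id_consistent k g).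
by apply: eq_card => w; rewrite !inE.
Qed.

Lemma id_of_rank_ok x : id_of_rank h (rk x) = id x.
Proof.
have [] : is_id h (id_of_rank h (rk x)) /\ rank h (id_of_rank h (rk x)) = rk x.
  apply: (epsilon_spec (inhabits 0) (fun k => is_id h k /\ rank h k = rk x)).
  exists (id x); rewrite rank_ok (is_id_consistent _ g m_gt0); split => //.
  by apply/existsP; exists x.
rewrite (is_id_consistent _ g m_gt0) => /existsP [w /eqP <-].
by rewrite rank_ok => /rk_inj ->.
Qed.

Lemma width_ok : width h = up_log 2 n.
Proof. by rewrite /width nnodes_ok. Qed.

End Consistent.

Hypothesis adj_simple : simple_graph adj.

Definition nbrs x := filter (fun k => [exists w, adj x w && (id w == k)]) (iota 0 id_sup).

Lemma nbr_ids_state t x : 0 < t -> nbr_ids (state t x) = nbrs x.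
Proof.
move=> ht; rewrite /nbr_ids; case: (state_fields t x) => _ _ -> _.
rewrite (@eq_filter _ _ (fun k => [exists w, adj x w && (id w == k)])); last first.
  move=> k; rewrite /nbr_table; case: pickP => [w hw|H] /=.
    by apply/esym/existsP; exists w.
  by apply/esym/negbTE/existsP => -[w]; rewrite H.
apply: eq_filter_iota => k /existsP [w /andP [_ /eqP <-]].
  exact: (id_boundP (consistent_state t x) ht).
exact: id_lt_sup.
Qed.

Lemma size_nbrs x : size (nbrs x) = deg adj x.
Proof.
rewrite size_filter (@count_ids (adj x)) //.
by apply: eq_card => w; rewrite !inE id_lt_sup andbT.
Qed.

Lemma mem_nbrs x y : (id y \in nbrs x) = adj x y.
Proof.
rewrite mem_filter mem_iota add0n id_lt_sup /= andbT.
apply/existsP/idP => [[w /andP [hw /eqP /id_inj <-]] //|hxy].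
by exists y; rewrite hxy eqxx.
Qed.

Lemma nth_nbrs x j : j < deg adj x -> exists2 y, adj x y & nth 0 (nbrs x) j = id y.
Proof.
move=> hj; have : nth 0 (nbrs x) j \in nbrs x by rewrite mem_nth ?size_nbrs.
by rewrite mem_filter => /andP [/existsP [y /andP [hy /eqP <-]] _]; exists y.
Qed.

Lemma nbr_table_id x y : adj x y -> nbr_table x (id y) = Some (ecol x y).
Proof.
move=> hxy; rewrite /nbr_table.
by case: pickP => [w /andP [_ /eqP /id_inj ->] //|/(_ y)]; rewrite hxy eqxx.
Qed.

Lemma bits_ltK x : x < n -> frombits (bits (up_log 2 n) x) = x.
Proof. by move=> hx; apply: bitsK; apply: leq_trans hx (up_logP _ _). Qed.

Lemma deg_of_rank_ok h v m x : consistent h v m -> 1 < m ->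
  deg_of_rank h (rk x) = deg adj x.
Proof.
move=> g hm; have g1 : consistent h v 1 by apply: consistent_le g; lia.
rewrite /deg_of_rank (id_of_rank_ok g1) // (msg_consistent _ g) //.
rewrite /send size_inbox /= (width_ok (consistent_state 1 x)) //.
by rewrite /own_deg nbr_ids_state // size_nbrs bits_ltK ?deg_lt.
Qed.

(* The edges of the nodes of rank < r are numbered [0, offset r). *)
Definition offset r := \sum_(x | rk x < r) deg adj x.

Lemma offset_rkS x : offset (rk x).+1 = offset (rk x) + deg adj x.
Proof.
rewrite /offset (bigD1 x) ?ltnSn //= addnC; congr (_ + _); apply: eq_bigl => w.
rewrite ltnS leq_eqVlt; case: eqP => [/rk_inj ->|]; first by rewrite ltnn eqxx.
by move=> hw /=; case: eqP => [wx|]; rewrite ?andbT // wx ltnn.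
Qed.

Lemma leq_offset a b : a <= b -> offset a <= offset b.
Proof.
move=> hab; rewrite /offset [leqRHS](bigID (fun x => rk x < a)) /=.
apply: leq_trans (leq_addr _ _); apply/eq_leq/eq_bigl => x.
by rewrite andb_idl // => /leq_trans; apply.
Qed.

Lemma offset_n : offset n = 2 * nedges adj.
Proof. by rewrite -sum_deg //; apply: eq_bigl => x; rewrite rk_lt. Qed.

Lemma edge_offset_ok h v m r : consistent h v m -> 1 < m -> r <= n ->
  edge_offset h r = offset r.
Proof.
move=> g hm; elim: r => [_|r IH hr].
  by rewrite /edge_offset big_geq // /offset big_pred0.
have [x hx] := rk_onto hr.
by rewrite /edge_offset big_nat_recr //= -/(edge_offset h r) IH 1?ltnW // -hx
  (deg_of_rank_ok _ g hm) offset_rkS.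
Qed.

Lemma offset_block_unique o o' i :
  offset o <= i < offset o.+1 -> offset o' <= i < offset o'.+1 -> o = o'.
Proof. by case: (ltngtP o o') => // /leq_offset; lia. Qed.

Lemma offset_block i r : i < offset r -> exists2 o, o < r & offset o <= i < offset o.+1.
Proof.
elim: r => [|r IH]; first by rewrite /offset big_pred0.
case: (ltnP i (offset r)) => [/IH [o ho hi]|hge] hlt; first by exists o => //; lia.
by exists r => //; rewrite hge.
Qed.

Lemma owner_ok h v m i o : consistent h v m -> 1 < m -> o < n ->
  offset o <= i < offset o.+1 -> owner h i = o.
Proof.
move=> g hm ho hi; have g1 : consistent h v 1 by apply: consistent_le g; lia.
have [] : owner h i < nnodes h /\
          edge_offset h (owner h i) <= i < edge_offset h (owner h i).+1.
  apply: (epsilon_spec (inhabits 0)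
            (fun o => o < nnodes h /\ edge_offset h o <= i < edge_offset h o.+1)).
  by exists o; rewrite (nnodes_ok g1) // !(edge_offset_ok g hm) // ltnW.
rewrite (nnodes_ok g1) // => ho'.
by rewrite !(edge_offset_ok g hm) ?(ltnW ho') // => /offset_block_unique; apply.
Qed.

Lemma send_scatter a x k : a < flen phi ->
  send D (state (2 + a) x) k = scatter_msg (state (2 + a) x) a k.
Proof.
case: (state_fields (2 + a) x) => _ _ _ Ephi ha.
by rewrite /send size_inbox Ephi /= ifT ?subn2 //; lia.
Qed.

Lemma scatter_vcol a x k : a < flen phi ->
  nth false (send D (state (2 + a) x) k) (up_log 2 n).+1 = vcol x a.
Proof.
move=> ha; rewrite send_scatter // /scatter_msg.
rewrite (width_ok (consistent_state _ x)) // -[(up_log 2 n).+1]addn1 nth_bits_cat.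
by case: (state_fields (2 + a) x) => _ -> _ _.
Qed.

Lemma modn_subK S j : j < n -> ((S + j) %% n + (n - S %% n)) %% n = j.
Proof.
move=> hj; have hs : S %% n < n by rewrite ltn_mod; lia.
rewrite modnDml {1}(divn_eq S n).
rewrite (_ : S %/ n * n + S %% n + j + (n - S %% n) = S %/ n * n + (j + n)); last by lia.
by rewrite modnMDl modnDr modn_small.
Qed.

Lemma scatter_edge a x y j z : a < flen phi -> j < deg adj x ->
  nth 0 (nbrs x) j = id y -> adj x y -> rk z = (offset (rk x) + j) %% n ->
  send D (state (2 + a) x) (id z) = bits (up_log 2 n) (rk y) ++ [:: ecol x y a; vcol x a].
Proof.
move=> ha hj hy hxy hz; have g := consistent_state (2 + a) x.
case: (state_fields (2 + a) x) => Eid Evc Enb _.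
rewrite send_scatter // /scatter_msg (nnodes_ok g) // (width_ok g) // Eid.
rewrite !(rank_ok g) // (edge_offset_ok g) ?(ltnW (rk_lt x)) // hz.
rewrite modn_subK; last by have := deg_lt x adj_simple; lia.
by rewrite nbr_ids_state // hy (rank_ok g) // Enb (nbr_table_id hxy) Evc.
Qed.

Hypothesis edges_le : 2 * nedges adj <= D * n.

Lemma send_relay q c z k : q < D -> c < flen phi ->
  send D (state (relay_round phi q c) z) k = relay_msg (state (relay_round phi q c) z) q c.
Proof.
case: (state_fields (relay_round phi q c) z) => _ _ _ Ephi hq hc.
set K := flen phi in hc *; have hDK := ltn_mul_add hq hc.
rewrite /send size_inbox Ephi -/K /relay_round.
rewrite (_ : (2 + K + q * K + c == 0) = false); last by lia.
rewrite (_ : (2 + K + q * K + c == 1) = false); last by lia.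
rewrite (_ : (2 + K + q * K + c < 2 + K) = false); last by lia.
rewrite (_ : (2 + K + q * K + c < 2 + K + D * K) = true); last by lia.
rewrite (_ : 2 + K + q * K + c - (2 + K) = q * K + c); last by lia.
by rewrite divnMDl ?modnMDl ?(divn_small hc) ?(modn_small hc) ?addn0 //; lia.
Qed.

Lemma relay_valid q c z k : q < D -> c < flen phi ->
  nth false (send D (state (relay_round phi q c) z) k) (up_log 2 n).*2 =
  (rk z + q * n < offset n).
Proof.
move=> hq hc; have g := consistent_state (relay_round phi q c) z.
case: (state_fields (relay_round phi q c) z) => Eid _ _ _.
have t_gt1 : 1 < relay_round phi q c by rewrite /relay_round; lia.
have t_gt0 := ltnW t_gt1.
rewrite send_relay // /relay_msg (width_ok g t_gt0) -addnn nth_bits_cat nth_bits_size.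
by rewrite Eid (rank_ok g t_gt0) (nnodes_ok g t_gt0) (edge_offset_ok g).
Qed.

Lemma relay_edge x y j z q c k : j < deg adj x -> nth 0 (nbrs x) j = id y -> adj x y ->
  rk z = (offset (rk x) + j) %% n -> q = (offset (rk x) + j) %/ n -> c < flen phi ->
  send D (state (relay_round phi q c) z) k =
    bits (up_log 2 n) (rk x) ++ bits (up_log 2 n) (rk y) ++ [:: true; ecol x y c].
Proof.
move=> hj hy hxy hz hqd hc; set i := offset (rk x) + j.
have hix : offset (rk x) <= i < offset (rk x).+1 by rewrite offset_rkS /i; lia.
have hi : i < offset n.
  by apply: leq_trans (leq_offset (rk_lt x)); case/andP: hix.
have n_gt0 : 0 < n by have := rk_lt x; lia.
have hq : q < D by rewrite hqd ltn_divLR // (leq_trans hi) // offset_n.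
have ei : rk z + q * n = i by rewrite hz hqd addnC -divn_eq.
have g := consistent_state (relay_round phi q c) z.
have t_gt1 : 1 < relay_round phi q c by rewrite /relay_round; lia.
have t_gt0 := ltnW t_gt1.
case: (state_fields (relay_round phi q c) z) => Eid _ _ _.
rewrite send_relay // /relay_msg Eid (rank_ok g t_gt0) (nnodes_ok g t_gt0).
rewrite (width_ok g t_gt0) (edge_offset_ok g) // ei hi.
rewrite (owner_ok g t_gt1 (rk_lt x) hix) (id_of_rank_ok g t_gt0).
rewrite (msg_consistent _ g); last by rewrite /relay_round; lia.
rewrite (scatter_edge hc hj hy hxy); last by rewrite hz.
by rewrite take_size_cat ?size_bits // bits_ltK ?rk_lt // nth_bits_size.
Qed.

Lemma decode_relay a b vb eb : a < n -> b < n ->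
  let W := up_log 2 n in let m := bits W a ++ bits W b ++ [:: vb; eb] in
  [/\ frombits (take W m) = a, frombits (take W (drop W m)) = b,
      nth false m W.*2 = vb & nth false m W.*2.+1 = eb].
Proof.
move=> ha hb W m; rewrite /m -addnn -addnS !nth_bits_cat drop_size_cat ?size_bits //.
rewrite !take_size_cat ?size_bits // !bits_ltK // nth_bits_size -addn1 nth_bits_cat.
by split.
Qed.

Section Gathered.
Variables (h : inbox) (v : 'I_n) (m : nat).
Hypotheses (g : consistent h v m) (hm : rounds D phi <= m).

Let m_gt0 : 0 < m. Proof. by move: hm; rewrite /rounds; lia. Qed.

Lemma slot_send z q c : q < D -> c < flen phi ->
  slot phi h (rk z) q c = send D (state (relay_round phi q c) z) (id v).
Proof.
move=> hq hc; rewrite /slot (id_of_rank_ok g m_gt0) (msg_consistent _ g) //.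
apply: leq_trans hm; rewrite /relay_round /rounds.
by have := ltn_mul_add hq hc; lia.
Qed.

Lemma slot_valid_ok z q : q < D -> slot_valid phi h (rk z) q = (rk z + q * n < offset n).
Proof.
have K_gt0 : 0 < flen phi by case: (phi).
by move=> hq; rewrite /slot_valid slot_send // (width_ok g m_gt0) relay_valid.
Qed.

Lemma slot_of_edge x y j z q : j < deg adj x -> nth 0 (nbrs x) j = id y -> adj x y ->
  rk z = (offset (rk x) + j) %% n -> q = (offset (rk x) + j) %/ n ->
  [/\ slot_src phi h (rk z) q = rk x, slot_dst phi h (rk z) q = rk y &
      forall c, c < flen phi -> slot_ecol phi h (rk z) q c = ecol x y c].
Proof.
move=> hj hy hxy hz hqd.
have hi : offset (rk x) + j < D * n.
  apply: leq_trans edges_le; rewrite -offset_n.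
  by apply: leq_trans (leq_offset (rk_lt x)); rewrite offset_rkS; lia.
have hq : q < D by rewrite hqd ltn_divLR //; lia.
have hs c : c < flen phi -> slot phi h (rk z) q c =
    bits (up_log 2 n) (rk x) ++ bits (up_log 2 n) (rk y) ++ [:: true; ecol x y c].
  by move=> hc; rewrite slot_send // (relay_edge _ hj hy hxy hz hqd hc).
have K_gt0 : 0 < flen phi by case: (phi).
have [src dst _ _] := decode_relay true (ecol x y 0) (rk_lt x) (rk_lt y).
rewrite /slot_src /slot_dst (width_ok g m_gt0) hs // src dst; split=> // c hc.
have [_ _ _ ec] := decode_relay true (ecol x y c) (rk_lt x) (rk_lt y).
by rewrite /slot_ecol (width_ok g m_gt0) hs.
Qed.

Lemma slot_sound z q : q < D -> rk z + q * n < offset n ->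
  exists x y, adj x y /\ [/\ slot_src phi h (rk z) q = rk x, slot_dst phi h (rk z) q = rk y &
      forall c, c < flen phi -> slot_ecol phi h (rk z) q c = ecol x y c].
Proof.
move=> hq hi; have n_gt0 : 0 < n by have := rk_lt z; lia.
have [o ho hoi] := offset_block hi; have [x hx] := rk_onto ho; subst o.
set j := rk z + q * n - offset (rk x).
have hj : j < deg adj x by move: hoi; rewrite offset_rkS /j; lia.
have [y hxy hy] := nth_nbrs hj.
have ei : offset (rk x) + j = rk z + q * n by rewrite /j; lia.
exists x, y; split => //; apply: (slot_of_edge hj hy hxy).
  by rewrite ei addnC modnMDl modn_small // rk_lt.
by rewrite ei addnC divnMDl // divn_small ?rk_lt // addn0.
Qed.

Lemma slot_complete x y : adj x y ->
  exists z q, [/\ q < D, rk z + q * n < offset n, slot_src phi h (rk z) q = rk x,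
    slot_dst phi h (rk z) q = rk y &
    forall c, c < flen phi -> slot_ecol phi h (rk z) q c = ecol x y c].
Proof.
move=> hxy; have n_gt0 : 0 < n by have := rk_lt x; lia.
set j := index (id y) (nbrs x).
have hj : j < deg adj x by rewrite -size_nbrs index_mem mem_nbrs.
have hy : nth 0 (nbrs x) j = id y by rewrite nth_index ?mem_nbrs.
set i := offset (rk x) + j.
have hi : i < offset n.
  by apply: leq_trans (leq_offset (rk_lt x)); rewrite offset_rkS /i; lia.
have [z hz] := rk_onto (r := i %% n) ltac:(by rewrite ltn_mod).
have [src dst ec] := slot_of_edge hj hy hxy hz (erefl _).
exists z, (i %/ n); split => //; last by rewrite hz addnC -divn_eq.
by rewrite ltn_divLR // (leq_trans hi) // offset_n.
Qed.

Lemma slot_edgeP (P : nat -> nat -> bool) :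
  reflect (exists z q, [/\ q < D, rk z + q * n < offset n & P (rk z) q])
          (slot_edge D phi h P).
Proof.
apply: (iffP hasP) => [[r] | [z [q [hq hi hP]]]].
  rewrite mem_iota add0n (nnodes_ok g m_gt0) => /andP [_ /rk_onto [z <-]].
  case/hasP => q; rewrite mem_iota add0n => /andP [_ hq] /andP [hv hP].
  by exists z, q; rewrite -slot_valid_ok.
exists (rk z); first by rewrite mem_iota add0n (nnodes_ok g m_gt0) rk_lt.
by apply/hasP; exists q; rewrite ?mem_iota ?slot_valid_ok ?hi.
Qed.

Lemma rk_nnodes x : rk x < nnodes h.
Proof. by rewrite (nnodes_ok g m_gt0) rk_lt. Qed.

Definition to_gathered x : 'I_(nnodes h) := Ordinal (rk_nnodes x).
Definition of_gathered (w : 'I_(nnodes h)) : 'I_n := odflt v [pick x | rk x == w].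

Lemma of_gatheredK : cancel of_gathered to_gathered.
Proof.
move=> w; have [x0 hx0] : exists x, rk x = w.
  by apply: rk_onto; rewrite -(nnodes_ok g m_gt0).
rewrite /of_gathered; case: pickP => [x /eqP hx|/(_ x0)]; last by rewrite hx0 eqxx.
exact: val_inj.
Qed.

Lemma to_gathered_inj : injective to_gathered.
Proof. by move=> x y /(congr1 val) /rk_inj. Qed.

Lemma gathered_adj_ok x y :
  gathered_adj D phi h (to_gathered x) (to_gathered y) = adj x y.
Proof.
apply/slot_edgeP/idP => [[z [q [hq hi /andP [/eqP hs /eqP hd]]]] | hxy].
  have [x' [y' [hxy [hs' hd' _]]]] := slot_sound hq hi.
  by move: hs hd; rewrite hs' hd' => /rk_inj <- /rk_inj <-.
have [z [q [hq hi hs hd _]]] := slot_complete hxy.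
by exists z, q; rewrite hs hd !eqxx.
Qed.

Lemma gathered_ecol_ok x y c : c < flen phi -> adj x y ->
  gathered_ecol D phi h (to_gathered x) (to_gathered y) c = ecol x y c.
Proof.
move=> hc hxy; rewrite /gathered_ecol hc; apply/slot_edgeP/idP.
  case=> z [q [hq hi /and3P [/eqP hs /eqP hd]]].
  have [x' [y' [_ [hs' hd' he]]]] := slot_sound hq hi.
  by move: hs hd; rewrite hs' hd' he // => /rk_inj <- /rk_inj <-.
have [z [q [hq hi hs hd he]]] := slot_complete hxy.
by exists z, q; rewrite hs hd he // !eqxx.
Qed.

Lemma gathered_vcol_ok x c : c < flen phi ->
  gathered_vcol phi h (to_gathered x) c = vcol x c.
Proof.
move=> hc; rewrite /gathered_vcol hc (width_ok g m_gt0) (id_of_rank_ok g m_gt0).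
rewrite (msg_consistent _ g) ?scatter_vcol //.
by apply: leq_trans hm; rewrite /rounds; lia.
Qed.

Lemma decide_gathered_ok v0 : sentence phi ->
  decide_gathered D phi h <-> models adj vcol ecol v0 phi.
Proof.
move=> hs; have iso x : sat adj vcol ecol (fun _ => x) phi <->
    sat (gathered_adj D phi h) (gathered_vcol phi h) (gathered_ecol D phi h)
        (fun _ => to_gathered x) phi.
  apply: (sat_iso (K := flen phi) to_gathered_inj of_gatheredK gathered_adj_ok) => //.
    by move=> y c hc; rewrite gathered_vcol_ok.
  by move=> y z c hc hyz; rewrite gathered_ecol_ok.
rewrite /models; split=> [/holdsP [w] | /iso hv0].
  by rewrite -(of_gatheredK w) => /iso /(sentence_sat _ _ _ _ _ hs).
by apply/holdsP; exists (to_gathered v0).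
Qed.

End Gathered.

Lemma size_send st k : size (send D st k) <= (width (node_inbox st)).*2.+2.
Proof.
rewrite /send; case: ifP => // _; case: ifP => _; first by rewrite size_bits; lia.
case: ifP => _; first by rewrite /scatter_msg size_cat size_bits /=; lia.
by case: ifP => // _; rewrite /relay_msg !size_cat !size_bits /=; lia.
Qed.

Lemma out_stable t v b : out D (state t v) = Some b -> out D (state t.+1 v) = Some b.
Proof.
case: (state_fields t v) => _ Evc Enb Ephi; case: (state_fields t.+1 v) => _ Evc' Enb' Ephi'.
rewrite /out /decide_alone Enb Enb' Ephi Ephi' Evc Evc' !size_inbox.
case: holdsP => // _; case: ifP => // hle [<-]; rewrite ifT; last by lia.
by rewrite /state /= -cats1 takel_cat -/(state t v) ?size_inbox.
Qed.

Lemma out_final t v : (exists u, adj v u) -> rounds D phi <= t ->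
  out D (state t v) =
  Some (decide_gathered D phi (take (rounds D phi) (node_inbox (state t v)))).
Proof.
move=> [u hu] ht; case: (state_fields t v) => _ _ Enb Ephi.
rewrite /out Enb Ephi size_inbox ht; case: holdsP => // /(_ (id u)).
by rewrite nbr_table_id.
Qed.

Lemma gather_decides_many v0 : 1 < n -> connected_graph adj -> sentence phi ->
  cc_decides (gather_alg D) 4 (rounds D phi * up_log 2 n) adj vcol ecol id phi
    (models adj vcol ecol v0 phi).
Proof.
move=> n_gt1 conn hs; have L_gt0 : 0 < up_log 2 n by rewrite up_log_gt0.
set T := rounds D phi * up_log 2 n.
have hT : rounds D phi <= T by rewrite leq_pmulr.
have fin v : @cc_out (gather_alg D) (state T v) = _ :=
  out_final (connected_has_nbr v n_gt1 conn) hT.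
have gath v : consistent (take (rounds D phi) (node_inbox (state T v))) v (rounds D phi).
  by have := consistent_take T v (rounds D phi); rewrite (minn_idPl hT).
split; [|split; [|split]].
- move=> [|t] u w _ _ //.
  apply: leq_trans (size_send _ _) _.
  by rewrite (width_ok (consistent_state t.+1 u)) //; lia.
- by move=> t v b _; apply: out_stable.
- by move=> v; rewrite fin.
split=> [[v] | hm].
  by rewrite fin => -[/(decide_gathered_ok (gath v) (leqnn _) v0 hs)].
exists v0; rewrite fin; congr Some.
exact/idP/(decide_gathered_ok (gath v0) (leqnn _) v0 hs).
Qed.

Lemma gather_decides_one v0 : n <= 1 ->
  cc_decides (gather_alg D) 4 0 adj vcol ecol id phi (models adj vcol ecol v0 phi).
Proof.
move=> n_le1.
have all_eq (x y : 'I_n) : x = y by apply: ord_inj; have := ltn_ord x; have := ltn_ord y; lia.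
have out0 v : @cc_out (gather_alg D) (state 0 v) = Some (decide_alone (state 0 v)).
  case: (state_fields 0 v) => _ _ Enb _; rewrite /= /out Enb.
  case: holdsP => // -[] k; rewrite /nbr_table; case: pickP => // u /andP [hu _].
  by rewrite (all_eq v u) (proj2 adj_simple) in hu.
have alone v : decide_alone (state 0 v) <-> models adj vcol ecol v0 phi.
  case: (state_fields 0 v) => _ Evc _ Ephi; rewrite /decide_alone Evc Ephi /models.
  apply: iff_trans (iff_sym (rwP (holdsP _))) _; symmetry.
  apply: (sat_iso (K := flen phi) (h := fun _ => ord0) (hinv := fun _ => v0)) => //.
  - by move=> w; rewrite (ord1 w).
  - by move=> x y; rewrite (all_eq x y) (proj2 adj_simple).
  - by move=> x c _; rewrite (all_eq x v).
  - by move=> x y c _; rewrite (all_eq x y) (proj2 adj_simple).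
split; [by [] | split; [by [] | split]].
- by move=> v; rewrite out0.
split=> [[v] | hm]; first by rewrite out0 => -[/alone].
by exists v0; rewrite out0; congr Some; apply/idP/alone.
Qed.

Lemma gather_decides v0 : connected_graph adj -> sentence phi ->
  cc_decides (gather_alg D) 4 (rounds D phi * up_log 2 n) adj vcol ecol id phi
    (models adj vcol ecol v0 phi).
Proof.
move=> conn hs; case: (ltnP 1 n) => [n_gt1 | n_le1]; first exact: gather_decides_many.
have /eqP -> : up_log 2 n == 0 by rewrite up_log_eq0 n_le1 orbT.
by rewrite muln0; exact: gather_decides_one.
Qed.

End Run.

Lemma nedges_le_bounded_expansion C f n (adj : rel 'I_n) :
  bounded_expansion_with C f -> C n adj -> simple_graph adj -> nedges adj <= f 0 * n.
Proof.
move=> hC hCG hs; apply: (hC 0 n adj hCG hs n adj hs).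
exists (fun i => [set i]); split; [|split].
- by move=> i j ij; rewrite disjoints1 inE.
- by move=> i; exists i; rewrite ?inE.
- by move=> i j hij; exists i, j; rewrite !inE !eqxx.
Qed.

Theorem mainTheorem16 (C : graph_class) :
  effectively_bounded_expansion C ->
  forall c : nat,
  exists (f : nat -> nat) (B : nat) (A : cc_algorithm),
    computable f /\
    forall (n : nat) (adj : rel 'I_n) (vcol : 'I_n -> nat -> bool)
           (ecol : 'I_n -> 'I_n -> nat -> bool) (id : 'I_n -> nat)
           (phi : formula) (v0 : 'I_n),
      C n adj -> simple_graph adj -> connected_graph adj ->
      (forall x y j, ecol x y j = ecol y x j) ->
      injective id -> (forall v, id v < n ^ c) ->
      sentence phi ->
      cc_decides A B (f (flen phi) * up_log 2 n) adj vcol ecol id phi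
        (models adj vcol ecol v0 phi).
Proof.
move=> [fe [fe_comp hBE]] c.
exists (fun K => (2 * fe 0).+1 * K + 2), 4, (gather_alg (2 * fe 0)).
split; first exact: computable_affine.
move=> n adj vcol ecol id phi v0 hC hs conn _ id_inj _ sent.
have hE : 2 * nedges adj <= 2 * fe 0 * n.
  by rewrite -mulnA leq_mul2l (nedges_le_bounded_expansion hBE hC hs) orbT.
rewrite (_ : _ * flen phi + 2 = rounds (2 * fe 0) phi); last by rewrite /rounds; lia.
exact: gather_decides.
Qed.
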